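(* Let $G$ be a bridged graph. Then $G$ is nicely bridged if any of the following holds: (a) $G$ is chordal; (b) $G$ does not contain a 3-sun as an induced subgraph; (c) every induced wheel of $G$ is uniquely centered; (d) $G$ contains no clique of size four.
   Context: A subgraph is isometric if its distances equal those of $G$; $G$ is bridged if it has no isometric cycle of length greater than three. A graph is chordal if it has no induced cycle of length greater than three. A set $K$ of vertices is convex if it contains all vertices on all shortest paths in $G$ between any two of its vertices. A graph is 2-self-centered if every vertex has eccentricity exactly 2. $G$ is nicely bridged if it is bridged and every 2-self-centered subgraph $G[S]$ induced by a convex set $S$ is chordal. The 3-sun is the graph on vertices $u,v,w,x,y,z$ where $\{x,y,z\}$ is a triangle and $u$ is adjacent to $y,z$, $v$ to $x,z$, $w$ to $x,y$ (i.e. a triangle $u,v,w$ with each edge subdivided and the three subdivision vertices joined into a clique). An induced wheel is a set $C\cup\{x\}$ where $C$ induces a cycle of length $k>3$ and $x\notin C$ is adjacent to every vertex of $C$; it is uniquely centered if there is no vertex $y\ne x$ such that $C\cup\{y\}$ is also an induced wheel. *)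

(* finite simple graphs as symmetric irreflexive relations
   e : rel T on a finType T. *)
From mathcomp Require Import all_boot.
Set Implicit Arguments. Unset Strict Implicit. Unset Printing Implicit Defensive.

Section Graphs.
Variable T : finType.
Implicit Types (e : rel T) (S : {set T}).

Definition walk e (x y : T) (n : nat) : Prop :=
  exists p : seq T, [/\ path e x p, last x p = y & size p = n].

(* d(x,y) = n (no such n if x, y lie in different components) *)
Definition is_dist e (x y : T) (n : nat) : Prop :=
  walk e x y n /\ forall m, m < n -> ~ walk e x y m.

(* the induced subgraph G[S], as a relation on T whose edges lie inside S *)
Definition induced e S : rel T := [rel a b | [&& a \in S, b \in S & e a b]].

Definition cyc_adj (k i j : nat) : bool :=
  (j == i.+1 %% k) || (i == j.+1 %% k).
Definition cyc_dist (k i j : nat) : nat :=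
  let d := (i - j) + (j - i) in minn d (k - d).

Definition is_cycle e (k : nat) (v : 'I_k -> T) : Prop :=
  injective v /\ forall i j : 'I_k, cyc_adj k i j -> e (v i) (v j).

Definition isometric_cycle e (k : nat) (v : 'I_k -> T) : Prop :=
  is_cycle e v /\ forall i j : 'I_k, is_dist e (v i) (v j) (cyc_dist k i j).

Definition induced_cycle e (k : nat) (v : 'I_k -> T) : Prop :=
  injective v /\ forall i j : 'I_k, e (v i) (v j) = cyc_adj k i j.

Definition bridged e : Prop :=
  forall (k : nat) (v : 'I_k -> T), 3 < k -> ~ isometric_cycle e v.

Definition chordal e : Prop :=
  forall (k : nat) (v : 'I_k -> T), 3 < k -> ~ induced_cycle e v.

Definition convex e S : Prop :=
  forall (x y z : T) (p : seq T), x \in S -> y \in S ->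
    path e x p -> last x p = y -> is_dist e x y (size p) ->
    z \in x :: p -> z \in S.

(* the graph with vertex set S and edge relation f is 2-self-centered:
   every vertex has eccentricity exactly 2 *)
Definition two_self_centered (f : rel T) S : Prop :=
  forall x, x \in S ->
    (forall y, y \in S -> exists2 n, n <= 2 & is_dist f x y n) /\
    (exists2 y, y \in S & is_dist f x y 2).

Definition nicely_bridged e : Prop :=
  bridged e /\
  forall S, convex e S -> two_self_centered (induced e S) S ->
    chordal (induced e S).

Definition induced_3sun e (u v w x y z : T) : Prop :=
  uniq [:: u; v; w; x; y; z] /\
  [/\ e x y, e y z & e x z] /\
  [/\ e u y, e u z, e v x, e v z & e w x] /\ e w y /\
  [/\ ~~ e u v, ~~ e u w & ~~ e v w] /\
  [/\ ~~ e u x, ~~ e v y & ~~ e w z].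

Definition has_induced_3sun e : Prop :=
  exists u v w x y z, induced_3sun e u v w x y z.

Definition induced_wheel e (k : nat) (v : 'I_k -> T) (x : T) : Prop :=
  3 < k /\ induced_cycle e v /\
  (forall i, v i != x) /\ (forall i, e x (v i)).

Definition uniquely_centered e (k : nat) (v : 'I_k -> T) (x : T) : Prop :=
  ~ exists y, y <> x /\ induced_wheel e v y.

Definition wheels_uniquely_centered e : Prop :=
  forall (k : nat) (v : 'I_k -> T) (x : T),
    induced_wheel e v x -> uniquely_centered e v x.

Definition has_K4 e : Prop :=
  exists a b c d : T, uniq [:: a; b; c; d] /\
    [/\ e a b, e a c & e a d] /\ [/\ e b c, e b d & e c d].

End Graphs.

From mathcomp Require Import all_boot zify.
From Stdlib Require Import Classical_Prop.
Set Implicit Arguments. Unset Strict Implicit. Unset Printing Implicit Defensive.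

(* Let G be bridged and S a set of vertices with G[S] 2-self-centered (the
   proof does not need S to be convex). Bridgedness is only used through the
   fact that induced 4- and 5-cycles are isometric, hence absent.  From this
   and the eccentricity condition we derive, for any induced cycle of length
   at least four in G[S]:
   - an induced 3-sun in G, found from a minimum-size set A of S that no
     vertex of S dominates: three of its private neighbours, or three common
     neighbours built around A when |A| = 3, complete a 3-sun;
   - a K4 and an induced wheel with two centres: on a shortest such cycle
     (of length at least six), any vertex seeing two rim vertices at distance
     three is adjacent to the whole rim (a hub); there are two adjacent hubs.
   Hence under (a) the cycle contradicts chordality directly, and under
   (b), (c) or (d) one of the obstructions above contradicts the hypothesis,
   so G[S] is chordal. *)

Lemma cyc_adjE n i j : i < n -> j < n ->
  cyc_adj n i j =
  [|| j == i.+1, i == j.+1, (i == n.-1) && (j == 0) | (j == n.-1) && (i == 0)].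
Proof.
move=> lt_in lt_jn; rewrite /cyc_adj.
have succ_mod a : a < n -> a.+1 %% n = if a.+1 == n then 0 else a.+1.
  by move=> lt_an; case: eqP => [->|ne]; rewrite ?modnn // modn_small //; lia.
rewrite !succ_mod //.
by case: (i.+1 =P n) => ?; case: (j.+1 =P n) => ?; lia.
Qed.

Lemma cyc_dist_adj k i j : i < k -> j < k -> i != j -> cyc_adj k i j ->
  cyc_dist k i j = 1.
Proof. by move=> lt_ik lt_jk ne_ij; rewrite cyc_adjE // /cyc_dist; lia. Qed.

Lemma short_cycle_midpoint k i j : k <= 5 -> i < k -> j < k -> i != j ->
  ~~ cyc_adj k i j ->
  cyc_dist k i j = 2 /\ exists2 m, m < k & cyc_adj k i m && cyc_adj k m j.
Proof.
move=> k_le5 lt_ik lt_jk ne_ij; rewrite cyc_adjE // => nadj_ij.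
split; first by rewrite /cyc_dist; lia.
have [d2|d_ne2] := eqVneq ((i - j) + (j - i)) 2.
  by exists (minn i j).+1; rewrite ?cyc_adjE //; lia.
have [wrap|no_wrap] := eqVneq (maxn i j) k.-1.
  by exists 0; rewrite ?cyc_adjE //; lia.
by exists (maxn i j).+1; rewrite ?cyc_adjE //; lia.
Qed.

Section Graph.
Variables (T : finType) (e : rel T).
Hypotheses (e_sym : symmetric e) (e_irr : irreflexive e).

Lemma edge_neq x y : e x y -> x != y.
Proof. by apply: contraTneq => ->; rewrite e_irr. Qed.

Lemma is_dist0 x : is_dist e x x 0.
Proof. by split; [exists [::] | ]. Qed.

Lemma is_dist1 x y : e x y -> is_dist e x y 1.
Proof.
move=> Exy; split; first by exists [:: y]; rewrite /= Exy.
case=> // _ [p [_ eq_xy size_p]]; case: p eq_xy size_p => //= eq_xy _.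
by rewrite eq_xy e_irr in Exy.
Qed.

Lemma is_dist2 m x y : x != y -> ~~ e x y -> e x m -> e m y -> is_dist e x y 2.
Proof.
move=> Nxy NExy Exm Emy; split; first by exists [:: m; y]; rewrite /= Exm Emy.
case=> [|[|//]] _ [p [Hp Hl Hs]].
- by case: p Hp Hl Hs => //= _ Hxy; rewrite Hxy eqxx in Nxy.
- case: p Hp Hl Hs => [|z [|//]] //= /andP [Hz _] Hzy _.
  by rewrite -Hzy Hz in NExy.
Qed.

(* Induced cycles of length at most five are isometric: all cyclic
   distances are at most two. *)
Lemma short_induced_cycle_isometric k (v : 'I_k -> T) :
  k <= 5 -> induced_cycle e v -> isometric_cycle e v.
Proof.
move=> k_le5 [vinj vadj]; split; first by split=> // i j; rewrite vadj.
move=> i j; have [->|ne_ij] := eqVneq i j.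
  by rewrite /cyc_dist !subnn addn0 min0n; apply: is_dist0.
have ne_v : v i != v j by rewrite (inj_eq vinj).
case Eij: (e (v i) (v j)); move: Eij; rewrite vadj => adj_ij.
  by rewrite cyc_dist_adj //; apply: is_dist1; rewrite vadj.
have [-> [m lt_mk /andP [adj_im adj_mj]]] :=
  short_cycle_midpoint k_le5 (ltn_ord i) (ltn_ord j) ne_ij (negbT adj_ij).
by apply: (is_dist2 (m := v (Ordinal lt_mk))); rewrite // ?vadj ?adj_ij.
Qed.

Hypothesis e_bridged : bridged e.

Lemma no_short_induced_cycle k (v : 'I_k -> T) :
  3 < k <= 5 -> ~ induced_cycle e v.
Proof.
case/andP=> k_gt3 k_le5 v_ind.
exact: (e_bridged k_gt3 (short_induced_cycle_isometric k_le5 v_ind)).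
Qed.

Lemma seq_induced_cycle x0 (s : seq T) : uniq s ->
  (forall i j, i < size s -> j < size s ->
     e (nth x0 s i) (nth x0 s j) = cyc_adj (size s) i j) ->
  induced_cycle e (fun i : 'I_(size s) => nth x0 s i).
Proof.
move=> s_uniq s_adj; split=> [i j /eqP|i j]; last exact: s_adj.
by rewrite nth_uniq // => /eqP/val_inj.
Qed.

Ltac by_sym := solve [ by [] | by rewrite e_irr | assumption
  | rewrite e_sym; assumption | rewrite eq_sym; assumption
  | apply/negbTE; assumption | rewrite e_sym; apply/negbTE; assumption
  | apply/negbT; assumption | rewrite e_sym; apply/negbT; assumption ].

Lemma no_induced_C4 a b c d :
  e a b -> e b c -> e c d -> e d a -> ~~ e a c -> ~~ e b d ->
  a != c -> b != d -> False.
Proof.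
move=> Eab Ebc Ecd Eda Nac Nbd Dac Dbd.
apply: (@no_short_induced_cycle 4 _ isT (@seq_induced_cycle a [:: a; b; c; d] _ _)).
  by rewrite /= !inE !negb_or Dac Dbd (eq_sym a d) !edge_neq.
by move=> [|[|[|[|i]]]] [|[|[|[|j]]]] //= _ _; rewrite cyc_adjE //=; by_sym.
Qed.

Lemma no_induced_C5 a b c d f :
  e a b -> e b c -> e c d -> e d f -> e f a ->
  ~~ e a c -> ~~ e a d -> ~~ e b d -> ~~ e b f -> ~~ e c f ->
  a != c -> a != d -> b != d -> b != f -> c != f -> False.
Proof.
move=> Eab Ebc Ecd Edf Efa Nac Nad Nbd Nbf Ncf Dac Dad Dbd Dbf Dcf.
apply: (@no_short_induced_cycle 5 _ isT (@seq_induced_cycle a [:: a; b; c; d; f] _ _)).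
  by rewrite /= !inE !negb_or Dac Dad Dbd Dbf Dcf (eq_sym a f) !edge_neq.
by move=> [|[|[|[|[|i]]]]] [|[|[|[|[|j]]]]] //= _ _; rewrite cyc_adjE //=; by_sym.
Qed.

Lemma C4_chord a b c d : e a b -> e b c -> e c d -> e d a -> ~~ e a c ->
  a != c -> b != d -> e b d.
Proof.
move=> Eab Ebc Ecd Eda Nac Dac Dbd; apply/negPn/negP => Nbd.
exact: (no_induced_C4 Eab Ebc Ecd Eda Nac Nbd Dac Dbd).
Qed.

Lemma neq_by u x y : e x u -> ~~ e y u -> x != y.
Proof. by move=> Exu; apply: contraNneq => <-. Qed.

Definition closed_adj (t a : T) : bool := (t == a) || e t a.

Lemma closed_adj_geodesic c x y t :
  closed_adj x c -> closed_adj y c -> x != y -> ~~ e x y ->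
  e x t -> e t y -> closed_adj t c.
Proof.
rewrite /closed_adj.
case/orP=> [/eqP -> _ _ _ Ect _|Exc]; first by rewrite e_sym Ect orbT.
case/orP=> [/eqP -> _ _ _ Etc|Eyc Dxy Nxy Ext Ety]; first by rewrite Etc orbT.
have [//|Dtc] := eqVneq t c; apply/orP; right.
apply/negPn/negP => Ntc.
by apply: (@no_induced_C4 c x t y); by_sym.
Qed.

(* Assembles a 3-sun from its fifteen (non-)adjacencies; the distinctness of
   the six vertices follows from them. *)
Lemma induced_3sun_of u v w x y z :
  e x y -> e y z -> e x z -> e u y -> e u z -> e v x -> e v z -> e w x ->
  e w y -> ~~ e u v -> ~~ e u w -> ~~ e v w -> ~~ e u x -> ~~ e v y ->
  ~~ e w z -> has_induced_3sun e.
Proof.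
move=> Exy Eyz Exz Euy Euz Evx Evz Ewx Ewy Nuv Nuw Nvw Nux Nvy Nwz.
exists u, v, w, x, y, z; split; last by do !split.
have Dxu : x != u by apply: (@neq_by v); rewrite // e_sym.
have Dyv : y != v by apply: (@neq_by u); rewrite // e_sym.
have Dzw : z != w by apply: (@neq_by u); rewrite // e_sym.
rewrite /= !inE !negb_or (neq_by Euy Nvy) (neq_by Euz Nwz) (neq_by Evz Nwz).
by rewrite !(eq_sym _ x) !(eq_sym _ y) !(eq_sym _ z) Dxu Dyv Dzw !edge_neq // e_sym.
Qed.

Section TwoSelfCentered.
Variable S : {set T}.
Hypothesis S_2sc : two_self_centered (induced e S) S.

Lemma common_neighbour x y : x \in S -> y \in S -> x != y -> ~~ e x y ->
  exists2 m, m \in S & e x m && e m y.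
Proof.
move=> xS yS Dxy Nxy; have [ecc_le2 _] := S_2sc xS.
have [n n_le2 [[p [p_path p_last p_size]] _]] := ecc_le2 y yS.
rewrite -p_size {p_size} in n_le2.
case: p p_path p_last n_le2 => [|a [|b [|//]]] /=.
- by move=> _ Exy; rewrite Exy eqxx in Dxy.
- by move=> /andP [/and3P [_ _ Exa] _] Eay; rewrite -Eay Exa in Nxy.
- move=> /and3P [/and3P [_ aS Exa] /and3P [_ _ Eab] _] Eby _.
  by exists a => //; rewrite Exa -Eby Eab.
Qed.

Lemma far_vertex x : x \in S -> exists2 y, y \in S & (x != y) && ~~ e x y.
Proof.
move=> xS; have [_ [y yS [_ no_shorter]]] := S_2sc xS; exists y => //.
apply/andP; split.
- by apply/eqP => Dxy; apply: (no_shorter 0) => //; exists [::].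
- apply/negP => Exy; apply: (no_shorter 1) => //; exists [:: y]; split => //=.
  by rewrite andbT; apply/and3P.
Qed.

(* A vertex u at distance two from both ends of an edge yz has a common
   neighbour with y and z (otherwise an induced C4 or C5 appears). *)
Lemma common_neighbour_of_edge u y z : u \in S -> y \in S -> z \in S ->
  u != y -> u != z -> ~~ e u y -> ~~ e u z -> e y z ->
  exists2 x, x \in S & [&& e x u, e x y & e x z].
Proof.
move=> uS yS zS Duy Duz Nuy Nuz Eyz.
have [a aS /andP [Eua Eay]] := common_neighbour uS yS Duy Nuy.
have [b bS /andP [Eub Ebz]] := common_neighbour uS zS Duz Nuz.
case Eaz: (e a z); first by exists a => //; rewrite (e_sym a u) Eua Eay.
case Eby: (e b y); first by exists b => //; rewrite (e_sym b u) Eub Eby Ebz.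
have Dab : a != b by apply: contraFneq Eaz => ->.
have Daz : a != z by apply: contraNneq Nuz => <-.
have Dyb : y != b by apply: contraNneq Nuy => ->.
exfalso; case Eab: (e a b).
- by apply: (@no_induced_C4 a y z b); by_sym.
- by apply: (@no_induced_C5 u a y z b); by_sym.
Qed.

(* The 3-sun is found through a minimal set A of S that no vertex of S
   dominates, i.e. such that no t in S has all of A in N[t]. *)
Definition undominated (A : {set T}) : bool :=
  (A \subset S) && [forall t in S, [exists a in A, ~~ closed_adj t a]].

Section MinimalUndominated.
Variable A : {set T}.
Hypotheses (A_sub : A \subset S)
  (A_undom : forall t, t \in S -> exists2 a, a \in A & ~~ closed_adj t a)
  (A_private : forall a, a \in A -> exists2 p, p \in S &
     ~~ closed_adj p a /\ forall b, b \in A -> b != a -> closed_adj p b).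

Lemma undominated_mem a : a \in A -> a \in S.
Proof. exact: (subsetP A_sub). Qed.

Lemma not_dominating t : t \in S -> (forall a, a \in A -> closed_adj t a) ->
  False.
Proof. by move=> tS dom_t; have [a aA] := A_undom tS; rewrite dom_t. Qed.

(* The private neighbours of two adjacent vertices of A would be joined by
   a geodesic dominating A. *)
Lemma undominated_independent a b : a \in A -> b \in A -> a != b -> ~~ e a b.
Proof.
move=> aA bA Dab; apply/negP => Eab.
have [pa paS [Npa pa_dom]] := A_private aA.
have [pb pbS [Npb pb_dom]] := A_private bA.
move: Npa Npb; rewrite /closed_adj !negb_or => /andP [Dpa Npa] /andP [Dpb Npb].
have Dba : b != a by rewrite eq_sym.
have Epab : e pa b.
  by case/orP: (pa_dom b bA Dba) => // /eqP Dpb'; rewrite Dpb' e_sym Eab in Npa.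
have Epba : e pb a.
  by case/orP: (pb_dom a aA Dab) => // /eqP Dpa'; rewrite Dpa' Eab in Npb.
have Npab : ~~ e pa pb.
  by apply/negP => E; apply: (@no_induced_C4 pa b a pb); by_sym.
have Dpab : pa != pb by apply: (@neq_by b).
have [t tS /andP [Ept Etp]] := common_neighbour paS pbS Dpab Npab.
have Dtb : t != b by apply: (@neq_by pb); by_sym.
have Dta : t != a by apply: (@neq_by pa); by_sym.
have Etab : e t a && e t b.
  case Eta: (e t a); case Etb: (e t b) => //; exfalso.
  - by apply: (@no_induced_C4 t a b pa); by_sym.
  - by apply: (@no_induced_C4 t b a pb); by_sym.
  - by apply: (@no_induced_C5 pa b a pb t); by_sym.
apply: (not_dominating tS) => c cA; case/andP: Etab => Eta Etb.
have [->|Dca] := eqVneq c a; first by rewrite /closed_adj Eta orbT.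
have [->|Dcb] := eqVneq c b; first by rewrite /closed_adj Etb orbT.
exact: (closed_adj_geodesic (pa_dom c cA Dca) (pb_dom c cA Dcb) Dpab Npab Ept Etp).
Qed.

Lemma closed_adj_pair p b c : b \in A -> c \in A -> b != c ->
  closed_adj p b -> closed_adj p c -> e p b.
Proof.
move=> bA cA Dbc; case/orP => [/eqP ->|//]; case/orP => [/eqP Dbc'|Ebc].
- by rewrite Dbc' eqxx in Dbc.
- by rewrite (negbTE (undominated_independent bA cA Dbc)) in Ebc.
Qed.


(* A private neighbour of a in A, adjacent to every other element of A
   (given at least three elements). *)
Lemma private_neighbour a : a \in A -> exists2 p, p \in S &
  [/\ p != a, ~~ e p a &
      forall b c, b \in A -> c \in A -> b != a -> c != a -> b != c -> e p b].
Proof.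
move=> aA; have [p pS [Npa p_dom]] := A_private aA.
move: Npa; rewrite /closed_adj negb_or => /andP [Dpa Npa].
exists p => //; split=> // b c bA cA Dba Dca Dbc.
exact: (closed_adj_pair bA cA Dbc (p_dom b bA Dba) (p_dom c cA Dca)).
Qed.

(* With four elements in A, the private neighbours of three of them form a
   triangle (chords of the 4-cycles through the fourth), giving a 3-sun. *)
Lemma sun_of_four a1 a2 a3 a4 : a1 \in A -> a2 \in A -> a3 \in A -> a4 \in A ->
  a1 != a2 -> a1 != a3 -> a2 != a3 -> a4 != a1 -> a4 != a2 -> a4 != a3 ->
  has_induced_3sun e.
Proof.
move=> a1A a2A a3A a4A D12 D13 D23 D41 D42 D43.
have D21 : a2 != a1 by rewrite eq_sym.
have D31 : a3 != a1 by rewrite eq_sym.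
have D32 : a3 != a2 by rewrite eq_sym.
have N12 := undominated_independent a1A a2A D12.
have N13 := undominated_independent a1A a3A D13.
have N23 := undominated_independent a2A a3A D23.
have N41 := undominated_independent a4A a1A D41.
have N42 := undominated_independent a4A a2A D42.
have N43 := undominated_independent a4A a3A D43.
have [p1 _ [Dp1 Np1 E1]] := private_neighbour a1A.
have [p2 _ [Dp2 Np2 E2]] := private_neighbour a2A.
have [p3 _ [Dp3 Np3 E3]] := private_neighbour a3A.
have E12 := E1 a2 a3 a2A a3A D21 D31 D23; have E13 := E1 a3 a2 a3A a2A D31 D21 D32.
have E14 := E1 a4 a2 a4A a2A D41 D21 D42.
have E21 := E2 a1 a3 a1A a3A D12 D32 D13; have E23 := E2 a3 a1 a3A a1A D32 D12 D31.
have E24 := E2 a4 a1 a4A a1A D42 D12 D41.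
have E31 := E3 a1 a2 a1A a2A D13 D23 D12; have E32 := E3 a2 a1 a2A a1A D23 D13 D21.
have E34 := E3 a4 a1 a4A a1A D43 D13 D41.
have P12 : e p1 p2.
  by apply: (@C4_chord a3 _ a4); by_sym || (apply: (@neq_by a2); by_sym).
have P23 : e p2 p3.
  by apply: (@C4_chord a1 _ a4); by_sym || (apply: (@neq_by a3); by_sym).
have P13 : e p1 p3.
  by apply: (@C4_chord a2 _ a4); by_sym || (apply: (@neq_by a3); by_sym).
by apply: (@induced_3sun_of a1 a2 a3 p1 p2 p3); by_sym.
Qed.

(* If A consists of three vertices, the 3-sun is built around them from
   common neighbours, each missing the closed neighbourhood of one a_i. *)
Lemma sun_of_three a1 a2 a3 : a1 \in A -> a2 \in A -> a3 \in A ->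
  a1 != a2 -> a1 != a3 -> a2 != a3 ->
  (forall c, c \in A -> c \in [:: a1; a2; a3]) -> has_induced_3sun e.
Proof.
move=> a1A a2A a3A D12 D13 D23 A_three.
have a1S := undominated_mem a1A; have a2S := undominated_mem a2A.
have a3S := undominated_mem a3A.
have N12 := undominated_independent a1A a2A D12.
have N13 := undominated_independent a1A a3A D13.
have N23 := undominated_independent a2A a3A D23.
have adj_closed x y : e x y -> closed_adj x y by move=> Exy; rewrite /closed_adj Exy orbT.
have not_all3 t : t \in S -> e t a1 -> e t a2 -> e t a3 -> False.
  move=> tS E1 E2 E3; apply: (not_dominating tS) => c /A_three.
  by rewrite !inE => /or3P [] /eqP ->; apply: adj_closed.
have [x xS /andP [E2x Ex3]] := common_neighbour a2S a3S D23 N23.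
have Dx1 : x != a1 by apply: (@neq_by a2); by_sym.
have Nx1 : ~~ e x a1 by apply/negP => Ex1; apply: (not_all3 x) => //; by_sym.
have D1x : a1 != x by rewrite eq_sym.
have N1x : ~~ e a1 x by rewrite e_sym.
have [y yS /and3P [Ey1 Eyx Ey3]] :=
  common_neighbour_of_edge a1S xS a3S D1x D13 N1x N13 Ex3.
have Ny2 : ~~ e y a2 by apply/negP => Ey2; apply: (not_all3 y).
have Ex2 : e x a2 by rewrite e_sym.
have [z zS /and3P [Ez1 Ezx Ez2]] :=
  common_neighbour_of_edge a1S xS a2S D1x D12 N1x N12 Ex2.
have Nz3 : ~~ e z a3 by apply/negP => Ez3; apply: (not_all3 z).
have Eyz : e y z.
  by apply: (@C4_chord a1 _ x); by_sym || (apply: (@neq_by a3); by_sym).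
by apply: (@induced_3sun_of a1 a2 a3 x y z); by_sym.
Qed.

Lemma undominated_three s0 : s0 \in S -> exists a1 a2 a3,
  [/\ [/\ a1 \in A, a2 \in A & a3 \in A] & [/\ a1 != a2, a1 != a3 & a2 != a3]].
Proof.
move=> s0S; have [a1 a1A _] := A_undom s0S.
have [a2 a2A] := A_undom (undominated_mem a1A).
rewrite /closed_adj negb_or => /andP [D12 _].
have N12 := undominated_independent a1A a2A D12.
have [m mS /andP [E1m Em2]] :=
  common_neighbour (undominated_mem a1A) (undominated_mem a2A) D12 N12.
have [a3 a3A] := A_undom mS.
rewrite /closed_adj negb_or => /andP [Dm3 Nm3].
exists a1, a2, a3; split=> //; split=> //.
- by apply: (@neq_by m); by_sym.
- by apply: (@neq_by m); by_sym.
Qed.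

End MinimalUndominated.

(* Minimality of an undominated set yields private neighbours: removing a
   makes A \ {a} dominated by some p, which then misses a. *)
Lemma minimal_undominated_private A :
  undominated A -> (forall B, undominated B -> #|A| <= #|B|) ->
  forall a, a \in A -> exists2 p, p \in S &
    ~~ closed_adj p a /\ forall b, b \in A -> b != a -> closed_adj p b.
Proof.
move=> /andP [A_sub /forall_inP A_undom] A_min a aA.
have : ~~ undominated (A :\ a).
  apply/negP => /A_min; rewrite [X in X <= _](cardsD1 a A) aA.
  by rewrite add1n ltnn.
rewrite /undominated (subset_trans (subsetDl A [set a]) A_sub) /=.
case/forall_inPn => p pS /exists_inPn p_dom; exists p => //; split.
- have /exists_inP [b bA Nb] := A_undom p pS.
  have [<- //|Dba] := eqVneq b a.
  by move: (p_dom b); rewrite !inE Dba bA Nb => /(_ isT).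
- by move=> b bA Dba; move: (p_dom b); rewrite !inE Dba bA => /(_ isT) /negPn.
Qed.

Lemma two_self_centered_3sun s0 : s0 \in S -> has_induced_3sun e.
Proof.
move=> s0S.
have S_undom : undominated S.
  rewrite /undominated subxx; apply/forall_inP => t tS.
  have [y yS /andP [Dty Nty]] := far_vertex tS.
  by apply/exists_inP; exists y; rewrite // /closed_adj negb_or Dty Nty.
case: (@arg_minnP _ S undominated (fun A => #|A|) S_undom) => A A_undom A_min.
have A_private := minimal_undominated_private A_undom A_min.
case/andP: A_undom => A_sub /forall_inP A_undom.
have {}A_undom t : t \in S -> exists2 a, a \in A & ~~ closed_adj t a.
  by move=> tS; apply/exists_inP: (A_undom t tS).
have [a1 [a2 [a3 [[a1A a2A a3A] [D12 D13 D23]]]]] :=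
  undominated_three A_sub A_undom A_private s0S.
case: (pickP [pred a | [&& a \in A, a != a1, a != a2 & a != a3]]) =>
  [a4 /and4P [a4A D41 D42 D43] | no_fourth].
  exact: (sun_of_four A_undom A_private a1A a2A a3A a4A D12 D13 D23 D41 D42 D43).
apply: (sun_of_three A_sub A_undom A_private a1A a2A a3A D12 D13 D23) => c cA.
move: (no_fourth c) => /=; rewrite cA !inE.
by case: eqP; case: eqP; case: eqP.
Qed.

(* A shortest induced cycle of length at least six of G[S]. Its rim is
   indexed by all naturals, modulo k. *)
Section MinimalCycle.
Variables (k : nat) (v : 'I_k -> T).
Hypotheses (k_gt5 : 5 < k) (vS : forall i, v i \in S) (vinj : injective v)
  (vadj : forall i j, e (v i) (v j) = cyc_adj k i j).
Hypothesis v_shortest : forall n (w : 'I_n -> T), 3 < n -> n < k ->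
  ~ induced_cycle (induced e S) w.

Lemma k_gt0 : 0 < k. Proof. exact: leq_trans k_gt5. Qed.

Definition rim (n : nat) : T := v (Ordinal (ltn_pmod n k_gt0)).

Lemma rimS n : rim n \in S. Proof. exact: vS. Qed.

Lemma rim_eqE a b : (rim a == rim b) = (a %% k == b %% k).
Proof. by rewrite (inj_eq vinj). Qed.

Lemma rim_ord (i : 'I_k) : rim i = v i.
Proof. by rewrite /rim; congr v; apply: val_inj; rewrite /= modn_small. Qed.

Lemma rim_eq_off x a b : a < k -> b < k -> (rim (x + a) == rim (x + b)) = (a == b).
Proof. by move=> lt_ak lt_bk; rewrite rim_eqE eqn_modDl !modn_small. Qed.

Lemma rim_adj_off x a b : a < k -> b < k -> e (rim (x + a)) (rim (x + b)) =
  [|| b == a.+1, a == b.+1, (a == k.-1) && (b == 0) | (b == k.-1) && (a == 0)].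
Proof.
move=> lt_ak lt_bk; rewrite /rim vadj /= /cyc_adj.
have succ_mod c : (c %% k).+1 %% k = c.+1 %% k by rewrite -addn1 modnDml addn1.
rewrite !succ_mod -!addnS !eqn_modDl (modn_small lt_ak) (modn_small lt_bk).
exact: cyc_adjE.
Qed.

Lemma rim_shift x i : exists2 a, a < k & rim i = rim (x + a).
Proof.
exists ((i + k - x %% k) %% k); first exact: ltn_pmod k_gt0.
apply/eqP; rewrite rim_eqE modnDmr {1}(divn_eq x k) -addnA.
have -> : x %% k + (i + k - x %% k) = i + k by have := ltn_pmod x k_gt0; lia.
by rewrite modnMDl modnDr.
Qed.

Lemma rim_period x : rim (x + k) = rim x.
Proof. by apply/eqP; rewrite rim_eqE modnDr. Qed.

Lemma rim_add0 x : rim x = rim (x + 0). Proof. by rewrite addn0. Qed.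

Lemma rim_adj01 x : e (rim (x + 0)) (rim (x + 1)). Proof. rewrite rim_adj_off; lia. Qed.
Lemma rim_adj12 x : e (rim (x + 1)) (rim (x + 2)). Proof. rewrite rim_adj_off; lia. Qed.
Lemma rim_adj23 x : e (rim (x + 2)) (rim (x + 3)). Proof. rewrite rim_adj_off; lia. Qed.
Lemma rim_nadj02 x : ~~ e (rim (x + 0)) (rim (x + 2)). Proof. rewrite rim_adj_off; lia. Qed.
Lemma rim_nadj03 x : ~~ e (rim (x + 0)) (rim (x + 3)). Proof. rewrite rim_adj_off; lia. Qed.
Lemma rim_nadj13 x : ~~ e (rim (x + 1)) (rim (x + 3)). Proof. rewrite rim_adj_off; lia. Qed.
Lemma rim_neq02 x : rim (x + 0) != rim (x + 2). Proof. rewrite rim_eq_off; lia. Qed.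
Lemma rim_neq03 x : rim (x + 0) != rim (x + 3). Proof. rewrite rim_eq_off; lia. Qed.
Lemma rim_neq13 x : rim (x + 1) != rim (x + 3). Proof. rewrite rim_eq_off; lia. Qed.

Ltac by_window := first [ exact: rim_adj01 | exact: rim_adj12 | exact: rim_adj23
  | exact: rim_nadj02 | exact: rim_nadj03 | exact: rim_nadj13
  | exact: rim_neq02 | exact: rim_neq03 | exact: rim_neq13 ].
Ltac by_rim :=
  solve [ by_sym | by_window | rewrite e_sym; by_window | rewrite eq_sym; by_window ].
(* [lia] after discarding the graph hypotheses, which only slow it down. *)
Ltac arith := repeat match goal with
  | H : context [e _ _] |- _ => clear H
  | H : context [_ \in S] |- _ => clear H
  | H : forall _, _ |- _ => clear H end; lia.

(* A vertex m off the rim, adjacent to rim (b + 1) and rim (b + n - 1) but to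
   no rim vertex strictly between them, closes an induced cycle of length n
   in G[S]; by minimality of k this is impossible when 3 < n < k. *)
Lemma no_short_fan b n m : 3 < n -> n < k -> m \in S -> (forall i, m != rim i) ->
  e m (rim (b + 1)) -> e m (rim (b + n.-1)) ->
  (forall i, 1 < i < n.-1 -> ~~ e m (rim (b + i))) -> False.
Proof.
move=> n_gt3 lt_nk mS m_off E1 En Emid.
pose w := fun i : 'I_n => if val i == 0 then m else rim (b + i).
apply: (@v_shortest n w n_gt3 lt_nk); split.
- move=> [i lt_in] [j lt_jn]; rewrite /w /= => wij; apply: val_inj => /=.
  move: wij; case: (i =P 0) => [->|/eqP i0]; case: (j =P 0) => [->|/eqP j0] //=.
  + by move=> m_rim; move: (m_off (b + j)); rewrite m_rim eqxx.
  + by move=> m_rim; move: (m_off (b + i)); rewrite m_rim eqxx.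
  + by move/eqP; rewrite rim_eq_off; [move/eqP | lia | lia].
- move=> [i lt_in] [j lt_jn]; rewrite /induced /= /w /= cyc_adjE //=.
  case: (i =P 0) => [i0|/eqP i0]; case: (j =P 0) => [j0|/eqP j0] /=.
  + by rewrite mS e_irr /=; lia.
  + rewrite mS rimS /=.
    case: (j =P 1) => [->|j1]; first by rewrite E1; lia.
    case: (j =P n.-1) => [->|jn]; first by rewrite En; lia.
    rewrite (negbTE (Emid j _)); lia.
  + rewrite mS rimS /= e_sym.
    case: (i =P 1) => [->|i1]; first by rewrite E1; lia.
    case: (i =P n.-1) => [->|iN]; first by rewrite En; lia.
    rewrite (negbTE (Emid i _)); lia.
  + by rewrite !rimS rim_adj_off /=; lia.
Qed.

Lemma off_rim x m : e m (rim x) -> e m (rim (x + 3)) -> forall i, m != rim i.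
Proof.
move=> E0 E3 i; apply/eqP => m_rim.
have [a lt_ak rim_i] := rim_shift x i.
move: E0 E3; rewrite m_rim rim_i [rim x]rim_add0.
rewrite !rim_adj_off; lia.
Qed.

(* Such a vertex is adjacent to the two rim vertices between them, since
   otherwise an induced C4 or C5 appears. *)
Lemma rim_window x m : e m (rim (x + 0)) -> e m (rim (x + 3)) ->
  e m (rim (x + 1)) /\ e m (rim (x + 2)).
Proof.
move=> E0 E3.
have m_off : forall i, m != rim i by apply: (off_rim (x := x)); rewrite // rim_add0.
case E1: (e m (rim (x + 1))); case E2: (e m (rim (x + 2))) => //; exfalso.
- by apply: (@no_induced_C4 m (rim (x + 1)) (rim (x + 2)) (rim (x + 3))); by_rim.
- by apply: (@no_induced_C4 m (rim (x + 0)) (rim (x + 1)) (rim (x + 2))); by_rim.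
- apply: (@no_induced_C5 m (rim (x + 0)) (rim (x + 1)) (rim (x + 2)) (rim (x + 3)));
    by_rim.
Qed.

(* A vertex of S adjacent to two rim vertices at distance three is a hub:
   it is adjacent to the whole rim. Otherwise the first gap in its rim
   neighbourhood after the window x..x+3, together with the next rim
   neighbour, gives a short fan. *)
Lemma rim_hub x m : m \in S -> e m (rim x) -> e m (rim (x + 3)) ->
  forall i, e m (rim i).
Proof.
move=> mS E0 E3; have m_off := off_rim E0 E3.
rewrite [rim x]rim_add0 in E0; have [E1 E2] := rim_window E0 E3.
suff all_t t : t < k -> e m (rim (x + t)).
  by move=> i; have [a lt_ak ->] := rim_shift x i; apply: all_t.
move=> lt_tk; apply/negPn/negP => Nt.
have ex_gap : exists t, (t < k) && ~~ e m (rim (x + t)) by exists t; rewrite lt_tk Nt.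
case: (ex_minnP ex_gap) => j /andP [lt_jk Nj] j_min.
have j_gt3 : 3 < j by case: j lt_jk Nj j_min => [|[|[|[|j]]]] //; rewrite ?E0 ?E1 ?E2 ?E3.
have before_gap s : s < j -> e m (rim (x + s)).
  move=> lt_sj; apply/negPn/negP => Ns.
  by have := j_min s; rewrite Ns andbT => /(_ (ltn_trans lt_sj lt_jk)); arith.
have ex_next : exists s, [&& j < s, s <= k & e m (rim (x + s))].
  by exists k; rewrite lt_jk leqnn rim_period [rim x]rim_add0 E0.
case: (ex_minnP ex_next) => l /and3P [lt_jl le_lk El] l_min.
have in_gap s : j <= s < l -> ~~ e m (rim (x + s)).
  move=> /andP [le_js lt_sl]; have [<- //|ne_js] := eqVneq j s.
  apply/negP => Es; have := l_min s; rewrite Es andbT.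
  have -> : j < s by arith.
  have -> : s <= k by arith.
  by move=> /(_ isT); arith.
apply: (@no_short_fan (x + j - 2) (l - j + 3) m); [arith | arith | done | done | | | ].
- rewrite (_ : x + j - 2 + 1 = x + (j - 1)); last arith.
  by apply: before_gap; arith.
- by rewrite (_ : x + j - 2 + (l - j + 3).-1 = x + l) //; arith.
- move=> i /andP [lt_1i lt_in].
  rewrite (_ : x + j - 2 + i = x + (j - 2 + i)); last arith.
  by apply: in_gap; arith.
Qed.

Lemma rim_transfer x w y :
  e w (rim (x + 0)) -> ~~ e w (rim (x + 1)) -> ~~ e w (rim (x + 2)) ->
  e y w -> e y (rim (x + 2)) -> e y (rim (x + 0)).
Proof.
move=> E0 N1 N2 Eyw Ey2.
have D1 : rim (x + 1) != w by apply: (@neq_by (rim (x + 2))); by_rim.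
have D2 : w != rim (x + 2) by apply: (@neq_by (rim (x + 0))); by_rim.
have D3 : y != rim (x + 0) by apply: (@neq_by (rim (x + 2))); by_rim.
have D4 : y != rim (x + 1) by apply: (@neq_by w); by_rim.
case Ey0: (e y (rim (x + 0))) => //; exfalso.
case Ey1: (e y (rim (x + 1))).
- by apply: (@no_induced_C4 w (rim (x + 0)) (rim (x + 1)) y); by_rim.
- by apply: (@no_induced_C5 w (rim (x + 0)) (rim (x + 1)) (rim (x + 2)) y); by_rim.
Qed.

Lemma hub_candidate x w y2 y3 :
  e w (rim (x + 0)) -> ~~ e w (rim (x + 1)) -> ~~ e w (rim (x + 2)) ->
  ~~ e w (rim (x + 3)) -> e y2 w -> e y2 (rim (x + 2)) -> e y3 w ->
  e y3 (rim (x + 3)) -> (y2 != y3 -> e y2 y3) ->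
  exists2 y, y \in [:: y2; y3] & e y (rim (x + 0)) && e y (rim (x + 3)).
Proof.
move=> E0 N1 N2 N3 E2w E22 E3w E33 E23.
have Y20 := rim_transfer E0 N1 N2 E2w E22.
case Y23: (e y2 (rim (x + 3))); first by exists y2; rewrite ?inE ?eqxx ?Y20.
have D23 : y2 != y3 by rewrite eq_sym; apply: (@neq_by (rim (x + 3))); by_rim.
have Y32 : e y3 (rim (x + 2)).
  have Ey23 := E23 D23; rewrite e_sym.
  apply: (@C4_chord y2 _ (rim (x + 3))); try by_rim.
  - by apply: (@neq_by w); by_rim.
  - by rewrite eq_sym; apply: (@neq_by w); by_rim.
have Y30 := rim_transfer E0 N1 N2 E3w Y32.
by exists y3; rewrite ?inE ?eqxx ?orbT ?Y30.
Qed.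

(* The common neighbour of rim 0 and rim 3 is a hub. *)
Lemma first_hub : exists2 h, h \in S & forall i, e h (rim i).
Proof.
have D03 := rim_neq03 0; have N03 := rim_nadj03 0.
have [m mS /andP [E0 E3]] := common_neighbour (rimS _) (rimS _) D03 N03.
by exists m => //; apply: (@rim_hub 0) => //; rewrite rim_add0 e_sym.
Qed.

(* Given a hub h, a vertex u of S at distance two from h leads to a second
   hub adjacent to u. *)
Section SecondHub.
Variables h u : T.
Hypotheses (h_hub : forall i, e h (rim i)) (hS : h \in S) (uS : u \in S)
  (Duh : u != h) (Nuh : ~~ e u h).

(* u is off the rim, since every rim vertex is adjacent to h. *)
Lemma far_off_rim i : u != rim i.
Proof. by rewrite eq_sym; apply: (@neq_by h); rewrite // e_sym. Qed.

(* Distinct rim neighbours of u are adjacent (chord of a 4-cycle via h). *)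
Lemma far_rim_adj a b : e u (rim a) -> e u (rim b) -> rim a != rim b ->
  e (rim a) (rim b).
Proof.
by move=> Ea Eb Dab; move: (h_hub a) (h_hub b) => Ha Hb; apply: (@C4_chord u _ h); by_sym.
Qed.

Lemma common_adj y z : e y u -> e y h -> e z u -> e z h -> y != z -> e y z.
Proof. by move=> *; apply: (@C4_chord u _ h); by_sym. Qed.

Lemma common_at i : ~~ e u (rim i) ->
  exists2 y, y \in S & [&& e y u, e y h & e y (rim i)].
Proof.
by move=> Nui; apply: common_neighbour_of_edge; rewrite ?rimS ?far_off_rim.
Qed.

Definition another_hub : Prop :=
  exists y, [/\ y \in S, y != h & forall i, e y (rim i)].

Lemma another_hub_of x y : y \in S -> e y u -> e y (rim (x + 0)) ->
  e y (rim (x + 3)) -> another_hub.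
Proof.
move=> yS Eyu Ey0 Ey3; exists y; split => //.
  by apply: (@neq_by u); rewrite // e_sym.
by apply: (@rim_hub x) => //; rewrite rim_add0.
Qed.

Lemma another_hub_of_window x w :
  e w (rim (x + 0)) -> ~~ e w (rim (x + 1)) -> ~~ e w (rim (x + 2)) ->
  ~~ e w (rim (x + 3)) -> ~~ e u (rim (x + 2)) -> ~~ e u (rim (x + 3)) ->
  (forall y, e y u -> e y h -> y != w -> e y w) -> another_hub.
Proof.
move=> E0 N1 N2 N3 Nu2 Nu3 sees_w.
have [y2 y2S /and3P [E2u E2h E22]] := common_at Nu2.
have [y3 y3S /and3P [E3u E3h E33]] := common_at Nu3.
have E2w : e y2 w by apply: sees_w => //; apply: (@neq_by (rim (x + 2))).
have E3w : e y3 w by apply: sees_w => //; apply: (@neq_by (rim (x + 3))).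
have [y y_in /andP [Y0 Y3]] := hub_candidate E0 N1 N2 N3 E2w E22 E3w E33
  (common_adj E2u E2h E3u E3h).
by move: y_in Y0 Y3; rewrite !inE => /orP [] /eqP ->; apply: another_hub_of.
Qed.

(* If u has a rim neighbour, some rim neighbour rim x of u has rim (x + 1)
   as a non-neighbour; the window x..x+3 then yields another hub. *)
Lemma another_hub_near i : e u (rim i) -> another_hub.
Proof.
have window x : e u (rim (x + 0)) -> ~~ e u (rim (x + 1)) -> another_hub.
  move=> E0 N1.
  have N2 : ~~ e u (rim (x + 2)).
    apply/negP => E2; have := far_rim_adj E0 E2.
    by rewrite rim_eq_off ?rim_adj_off; arith.
  have N3 : ~~ e u (rim (x + 3)).
    apply/negP => E3; have := far_rim_adj E0 E3.
    by rewrite rim_eq_off ?rim_adj_off; arith.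
  by apply: (@another_hub_of_window x u) => // y Eyu.
move=> Ei; case Ei1: (e u (rim (i + 1))); last by apply: (window i); rewrite ?addn0 ?Ei1.
apply: (window (i + 1)); first by rewrite addn0.
apply/negP => Ei2; have := far_rim_adj Ei Ei2.
rewrite [rim i]rim_add0 (_ : i + 1 + 1 = i + 2); last arith.
by rewrite rim_eq_off ?rim_adj_off; arith.
Qed.

(* If u has no rim neighbour, a common neighbour y0 of u, h and rim 0 is a
   hub, or its first rim non-neighbour gives a window as above. *)
Lemma another_hub_far : (forall n, ~~ e u (rim n)) -> another_hub.
Proof.
move=> Nu; have [y0 y0S /and3P [E0u E0h E00]] := common_at (Nu 0).
have [/forallP y0_all|] := boolP [forall t : 'I_k, e y0 (rim t)].
  have lt_3k : 3 < k by arith.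
  by apply: (@another_hub_of 0 y0); rewrite // ?add0n // (y0_all (Ordinal lt_3k)).
rewrite negb_forall => /existsP [t Nt].
have ex_gap : exists t, (t < k) && ~~ e y0 (rim t) by exists t; rewrite ltn_ord Nt.
case: (ex_minnP ex_gap) => j /andP [lt_jk Nj] j_min.
have j_gt0 : 0 < j by case: j lt_jk Nj j_min => // _; rewrite E00.
pose x := j.-1.
have Y0 : e y0 (rim (x + 0)).
  apply/negPn/negP => N; have := j_min x; rewrite addn0 in N; rewrite N andbT.
  have -> : x < k by rewrite /x; arith.
  by move=> /(_ isT); rewrite /x; arith.
have N1 : ~~ e y0 (rim (x + 1)) by rewrite /x (_ : j.-1 + 1 = j) //; arith.
have N2 : ~~ e y0 (rim (x + 2)).
  apply/negP => E2.
  apply: (@no_induced_C4 y0 (rim (x + 0)) (rim (x + 1)) (rim (x + 2))); try by_rim.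
  by apply: (@neq_by u) => //; rewrite e_sym; apply: Nu.
case Y3: (e y0 (rim (x + 3))); first exact: (@another_hub_of x y0).
apply: (@another_hub_of_window x y0) => //; rewrite ?Y3 ?Nu //.
by move=> y Eyu Eyh Dy0; apply: common_adj.
Qed.

Lemma another_hub_exists : another_hub.
Proof.
case: (pickP (fun i : 'I_k => e u (rim i))) => [i Ei | no_nbr].
  exact: (another_hub_near Ei).
apply: another_hub_far => n; have := no_nbr (Ordinal (ltn_pmod n k_gt0)).
rewrite /= => /negbT; rewrite (_ : rim (n %% k) = rim n) //.
by apply/eqP; rewrite rim_eqE modn_mod.
Qed.

End SecondHub.
(* Two hubs are adjacent (chord of the 4-cycle through rim 0 and rim 2);
   with two consecutive rim vertices they form a K4, and the rim is an
   induced wheel centred at each of them. *)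
Lemma shortest_cycle_obstructions : has_K4 e /\ ~ wheels_uniquely_centered e.
Proof.
have [h hS h_hub] := first_hub.
have [u uS /andP [Dhu Nhu]] := far_vertex hS.
have Duh : u != h by rewrite eq_sym.
have Nuh : ~~ e u h by rewrite e_sym.
have [y [yS Dyh y_hub]] := another_hub_exists h_hub hS uS Duh Nuh.
have Ehy : e h y.
  move: (h_hub (0 + 0)) (h_hub (0 + 2)) (y_hub (0 + 0)) (y_hub (0 + 2)) => ? ? ? ?.
  by apply: (@C4_chord (rim (0 + 0)) _ (rim (0 + 2))); by_rim.
have wheel c : (forall i, e c (rim i)) -> induced_wheel e v c.
  move=> c_hub; do 2?split => //; first exact: (leq_trans _ k_gt5).
  by split=> i; rewrite -rim_ord ?c_hub // eq_sym edge_neq.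
split.
- exists h, y, (rim 0), (rim 1).
  move: (h_hub 0) (h_hub 1) (y_hub 0) (y_hub 1) (rim_adj01 0) => ? ? ? ? ?.
  split; last by do 2!split.
  by rewrite /= !inE !negb_or eq_sym Dyh !edge_neq.
- move=> unique; apply: (unique k v h (wheel h h_hub)).
  by exists y; split; [apply/eqP | apply: wheel].
Qed.

End MinimalCycle.

Lemma induced_cycle_in k (w : 'I_k -> T) : induced_cycle (induced e S) w ->
  (forall i, w i \in S) /\ induced_cycle e w.
Proof.
move=> [winj wadj]; have wS i : w i \in S.
  have k_gt0 : 0 < k by apply: leq_ltn_trans (ltn_ord i).
  have := wadj i (Ordinal (ltn_pmod i.+1 k_gt0)).
  by rewrite /cyc_adj /= eqxx /= => /and3P [].
by split => //; split => // i j; rewrite -wadj /induced /= !wS.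
Qed.

(* Any induced cycle of length at least four in G[S] forces a K4 and a
   wheel with two centres: pass to a shortest one, which has length at least
   six since G has no induced C4 or C5. *)
Lemma induced_cycle_obstructions k (w : 'I_k -> T) :
  3 < k -> induced_cycle (induced e S) w ->
  has_K4 e /\ ~ wheels_uniquely_centered e.
Proof.
elim/ltn_ind: k w => k IH w k_gt3 w_ind.
have [wS [winj wadj]] := induced_cycle_in w_ind.
have [[n [w' [n_gt3 lt_nk w'_ind]]]|shortest] := classic (exists n (w' : 'I_n -> T),
  [/\ 3 < n, n < k & induced_cycle (induced e S) w']).
  exact: IH n lt_nk w' n_gt3 w'_ind.
have k_gt5 : 5 < k.
  rewrite ltnNge; apply/negP => k_le5.
  by apply: (@no_short_induced_cycle k w); rewrite ?k_gt3.
apply: (shortest_cycle_obstructions k_gt5 wS winj wadj) => n w' n_gt3 lt_nk w'_ind.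
by apply: shortest; exists n, w'.
Qed.

End TwoSelfCentered.
End Graph.

Theorem mainTheorem12 (T : finType) (e : rel T)
    (e_sym : symmetric e) (e_irr : irreflexive e) :
  bridged e ->
  (chordal e \/ ~ has_induced_3sun e \/ wheels_uniquely_centered e \/
   ~ has_K4 e) ->
  nicely_bridged e.
Proof.
move=> e_bridged hyp; split=> // S _ S_2sc k w k_gt3 w_ind.
have [wS w_ind_G] := induced_cycle_in w_ind.
have [K4 not_unique] := induced_cycle_obstructions e_sym e_irr e_bridged S_2sc k_gt3 w_ind.
case: hyp => [chordal_e | [no_sun | [unique | no_K4]]] //.
- exact: chordal_e k w k_gt3 w_ind_G.
- have k_gt0 : 0 < k by apply: leq_trans k_gt3.
  exact/no_sun/(two_self_centered_3sun e_sym e_irr e_bridged S_2sc (wS (Ordinal k_gt0))).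
Qed.
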